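(* Let $-\infty\le a<b\le+\infty$, $I=(a,b)$, $n\in\mathbb N$ with $n>1$, and let $\{I_j\}_{j=1}^n$ and $\{\widehat I_j\}_{j=1}^n$ be partitions in $\mathcal C_n(I)$. Then there exist indices $j_1,j_2\in\{1,\dots,n\}$ such that \[ I_{j_1}\subseteq \widehat I_{j_1}\qquad\text{and}\qquad \widehat I_{j_2}\subseteq I_{j_2}. \] Moreover, if $\{I_j\}$ and $\{\widehat I_j\}$ are distinct partitions, the indices can be chosen so that both inclusions are strict.
   Context: $\mathcal C_n(I)$ is the class of partitions $\{I_j\}_{j=1}^n$ of $I$ into open intervals $I_j=(x_{j-1},x_j)$, where $x_0:=a$, $x_n:=b$ and $x_{j-1}\le x_j$ for $1\le j\le n$ (some $I_j$ may be empty). *)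

From HB Require Import structures.
From mathcomp Require Import all_boot all_order all_algebra.
From mathcomp Require Import all_classical all_reals ereal.
Set Implicit Arguments. Unset Strict Implicit. Unset Printing Implicit Defensive.
Import Order.TTheory GRing.Theory Num.Theory.
Local Open Scope classical_set_scope.
Local Open Scope ring_scope.

(* A partition in C_n(I), I = (a,b), is given by its extended-real break points
   x 0 = a <= x 1 <= ... <= x n = b (values of x beyond n are irrelevant). *)
Definition Cn_points (R : realType) (a b : \bar R) (n : nat) (x : nat -> \bar R) : Prop :=
  x 0%N = a /\ x n = b /\ forall j : nat, (0 < j <= n)%N -> (x j.-1 <= x j)%E.

Definition Cn_interval (R : realType) (x : nat -> \bar R) (j : nat) : set R :=
  [set t : R | (x j.-1 < t%:E)%E /\ (t%:E < x j)%E].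

(* Both partitions share the end points [x 0 = y 0] and [x n = y n].  If they
   differ at some break point k, say [x k < y k], then walking down from k to 0
   the sign of [y i - x i] must switch: at the switching index j we have
   [y (j-1) <= x (j-1)] and [x j < y j], so the j-th interval of x lies strictly
   inside that of y; if [y k < x k], walk up from k to n instead.  Exchanging
   x and y gives the reverse inclusion, and if all break points agree every
   index works. *)
From HB Require Import structures.
From mathcomp Require Import all_boot all_order all_algebra.
From mathcomp Require Import all_classical all_reals ereal.
From mathcomp Require Import lra.
Import Order.TTheory GRing.Theory Num.Theory.
Local Open Scope classical_set_scope.
Local Open Scope ring_scope.

Lemma exists_switch (P : pred nat) (m n : nat) :
  (m <= n)%N -> P m -> ~~ P n -> exists j, (m < j <= n)%N /\ P j.-1 /\ ~~ P j.
Proof.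
elim: n => [|n IHn]; first by rewrite leqn0 => /eqP-> ->.
move=> mn Pm NPn1; have mn' : (m <= n)%N.
  by rewrite -ltnS ltn_neqAle mn andbT; apply: contraTneq Pm => ->.
have [Pn | NPn] := boolP (P n); first by exists n.+1; rewrite ltnS mn' leqnn.
have [j [/andP[mj jn] PNj]] := IHn mn' Pm NPn.
by exists j; rewrite mj (leq_trans jn).
Qed.

Lemma EFin_between (R : realType) (u v : \bar R) :
  (u < v)%E -> exists t : R, (u < t%:E < v)%E.
Proof.
case: u => [r| |]; case: v => [s| |] //.
- by rewrite lte_fin => rs; exists ((r + s) / 2); rewrite !lte_fin; apply/andP; split; lra.
- by move=> _; exists (r + 1); rewrite ltey andbT lte_fin; lra.
- by move=> _; exists (s - 1); rewrite ltNye lte_fin /=; lra.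
- by move=> _; exists 0; rewrite ltNye ltey.
Qed.

Section BreakPoints.
Context {R : realType}.
Implicit Types x y : nat -> \bar R.

Lemma Cn_interval_sub x y j :
  (y j.-1 <= x j.-1)%E -> (x j <= y j)%E -> Cn_interval x j `<=` Cn_interval y j.
Proof.
by move=> yx xy t [xt tx]; split; [exact: le_lt_trans xt | exact: lt_le_trans xy].
Qed.

Lemma Cn_interval_proper x y j :
  (x j.-1 <= x j)%E -> (y j.-1 <= x j.-1)%E -> (x j <= y j)%E ->
  (y j.-1 < x j.-1)%E \/ (x j < y j)%E -> Cn_interval x j `<` Cn_interval y j.
Proof.
move=> xmono yx xy gap; split; first exact: Cn_interval_sub.
move=> sub_yx; case: gap => /EFin_between.
- case=> t /andP[yt tx]; have [xt _] := sub_yx t (conj yt (lt_le_trans tx (le_trans xmono xy))).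
  by rewrite ltNge (ltW xt) in tx.
- case=> t /andP[xt ty]; have [_ tx] := sub_yx t (conj (le_lt_trans (le_trans yx xmono) xt) ty).
  by rewrite ltNge (ltW xt) in tx.
Qed.

Lemma Cn_interval_neq_points {x y} {n j : nat} :
  (j <= n)%N -> Cn_interval x j <> Cn_interval y j -> exists2 k, (k <= n)%N & x k != y k.
Proof.
move=> jn neq_xy; apply: contrapT => no_k; apply: neq_xy.
have eq_at k : (k <= n)%N -> x k = y k
  by move=> kn; apply: contrapT => /eqP xy_k; apply: no_k; exists k.
by rewrite /Cn_interval !eq_at // (leq_trans (leq_pred j)).
Qed.

End BreakPoints.

Section TwoPartitions.
Context {R : realType} {a b : \bar R} {n : nat} {x y : nat -> \bar R}.
Hypotheses (hx : Cn_points a b n x) (hy : Cn_points a b n y).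

Lemma Cn_exists_proper_subinterval k :
  (k <= n)%N -> x k != y k ->
  exists j, (1 <= j <= n)%N /\ Cn_interval x j `<` Cn_interval y j.
Proof.
have [[x0 [xn xmono]] [y0 [yn _]]] := (hx, hy).
move=> kn /lt_total/orP[xy_k | yx_k].
- have yx_0 : (y 0 <= x 0)%E by rewrite x0 y0.
  have xy_k' : ~~ (y k <= x k)%E by rewrite -ltNge.
  have [j [/andP[j_gt0 jk] [yx_pj]]] :=
    @exists_switch (fun i => y i <= x i)%E 0 k (leq0n k) yx_0 xy_k'.
  rewrite -ltNge => xy_j; have jn : (0 < j <= n)%N by rewrite j_gt0 (leq_trans jk kn).
  exists j; split => //; apply: Cn_interval_proper; rewrite ?(xmono _ jn) ?(ltW xy_j) //.
  by right.
- have yx_n : ~~ (y n < x n)%E by rewrite xn yn ltxx.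
  have [j [/andP[kj jn] [yx_pj]]] := @exists_switch (fun i => y i < x i)%E k n kn yx_k yx_n.
  rewrite -leNgt => xy_j; have jn' : (0 < j <= n)%N by rewrite jn (leq_ltn_trans _ kj).
  exists j; split => //; apply: Cn_interval_proper; rewrite ?(xmono _ jn') ?(ltW yx_pj) //.
  by left.
Qed.

Lemma Cn_exists_subinterval :
  (0 < n)%N -> exists j, (1 <= j <= n)%N /\ Cn_interval x j `<=` Cn_interval y j.
Proof.
move=> n_gt0; have [xy_eq | /(Cn_interval_neq_points n_gt0)[k kn xyk]] :=
  pselect (Cn_interval x 1 = Cn_interval y 1).
  by exists 1%N; rewrite n_gt0 xy_eq; split.
by have [j [jn /properW]] := Cn_exists_proper_subinterval k kn xyk; exists j.
Qed.

End TwoPartitions.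

Theorem lemma2p12 (R : realType) (a b : \bar R) (n : nat) (x y : nat -> \bar R) :
  (a < b)%E -> (1 < n)%N ->
  Cn_points a b n x -> Cn_points a b n y ->
  (exists j1 j2 : nat, (1 <= j1 <= n)%N /\ (1 <= j2 <= n)%N /\
     Cn_interval x j1 `<=` Cn_interval y j1 /\ Cn_interval y j2 `<=` Cn_interval x j2) /\
  ((exists j : nat, (1 <= j <= n)%N /\ Cn_interval x j <> Cn_interval y j) ->
   exists j1 j2 : nat, (1 <= j1 <= n)%N /\ (1 <= j2 <= n)%N /\
     Cn_interval x j1 `<` Cn_interval y j1 /\ Cn_interval y j2 `<` Cn_interval x j2).
Proof.
move=> _ n_gt1 hx hy; have n_gt0 := ltnW n_gt1; split.
  have [j1 [j1n sub1]] := Cn_exists_subinterval hx hy n_gt0.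
  have [j2 [j2n sub2]] := Cn_exists_subinterval hy hx n_gt0.
  by exists j1, j2.
move=> [j [/andP[_ jn] /(Cn_interval_neq_points jn)[k kn xyk]]].
have [j1 [j1n sub1]] := Cn_exists_proper_subinterval hx hy k kn xyk.
rewrite eq_sym in xyk; have [j2 [j2n sub2]] := Cn_exists_proper_subinterval hy hx k kn xyk.
by exists j1, j2.
Qed.
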